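(* Let $C$ and $C'$ be configurations on the same board of $l$ rows and $w$ columns containing $n$ tiles. If $C$ can be reconfigured into $C'$ by a sequence of steps each in direction west, south, or east, then there exists a step sequence $S$ of length $O(n l w^2)$, using only west, south and east steps, such that applying $S$ to $C$ yields $C'$.
   Context: A board is a rectangular region of the square lattice, formally a partition $B=(O,W)$ of a rectangular set of grid points into open locations $O$ and blocked locations $W$. A tile is a labeled unit square centered on an open location. A configuration $C=(B,P)$ consists of a board $B$ and a set $P$ of tiles, no two at the same location and none at a blocked location. A step in direction $d\in\{N,E,S,W\}$ transforms a configuration as follows: consider translating every tile by one unit in direction $d$; every tile whose translation would land on a blocked location is temporarily added to the blocked set, and this is repeated until no remaining tile's translation lands on a blocked location; then all remaining tiles are translated by one unit in direction $d$. A step sequence is a sequence of directions, applied as successive steps. $C$ can be reconfigured into $C'$ if some step sequence applied to $C$ yields $C'$. *)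

From mathcomp Require Import all_boot.
Set Implicit Arguments. Unset Strict Implicit. Unset Printing Implicit Defensive.

(* Directions of steps.  Rows are numbered 0..l-1 from north to south,
   columns 0..w-1 from west to east. *)
Inductive dir := North | East | South | West.

Definition opp (d : dir) : dir :=
  match d with North => South | South => North | East => West | West => East end.

Definition pos (l w : nat) := ('I_l * 'I_w)%type.

(* The neighbour of p in direction d, or None if it lies outside the
   rectangular board (outside locations behave as blocked). *)
Definition shift {l w : nat} (d : dir) (p : pos l w) : option (pos l w) :=
  match d with
  | North => if nat_of_ord p.1 is r.+1
             then omap (fun r' : 'I_l => (r', p.2)) (insub r) else None
  | South => omap (fun r' : 'I_l => (r', p.2)) (insub (nat_of_ord p.1).+1)
  | East  => omap (fun c' : 'I_w => (p.1, c')) (insub (nat_of_ord p.2).+1)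
  | West  => if nat_of_ord p.2 is c.+1
             then omap (fun c' : 'I_w => (p.1, c')) (insub c) else None
  end.

(* A configuration on the board with blocked set Wb is given by the tile
   placement t : each location holds at most one labeled tile. *)
Definition valid {L : Type} {l w : nat} (Wb : {set pos l w})
  (t : {ffun pos l w -> option L}) : Prop :=
  forall p, p \in Wb -> t p = None.

Definition occupied {L : Type} {l w : nat} (t : {ffun pos l w -> option L}) :=
  [set p | isSome (t p)].

Definition ntiles {L : Type} {l w : nat} (t : {ffun pos l w -> option L}) : nat :=
  #|occupied t|.

(* One round of the "temporarily blocked" closure: a tile becomes blocked
   if its translate is a blocked location, outside the board, or an
   already temporarily blocked tile. *)
Definition stuck_step {L : Type} {l w : nat} (Wb : {set pos l w}) (d : dir)
  (t : {ffun pos l w -> option L}) (X : {set pos l w}) : {set pos l w} :=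
  [set p | isSome (t p) &&
           match shift d p with
           | None => true
           | Some q => (q \in Wb) || (q \in X)
           end].

(* Repeating until stabilisation: #|pos| rounds always suffice (the
   iteration is monotone and increasing). *)
Definition stuck {L : Type} {l w : nat} (Wb : {set pos l w}) (d : dir)
  (t : {ffun pos l w -> option L}) : {set pos l w} :=
  iter #|{: pos l w}| (stuck_step Wb d t) set0.

(* A step in direction d: stuck tiles stay, all other tiles move by one. *)
Definition step {L : Type} {l w : nat} (Wb : {set pos l w})
  (t : {ffun pos l w -> option L}) (d : dir) : {ffun pos l w -> option L} :=
  [ffun q => if q \in stuck Wb d t then t q
             else match shift (opp d) q with
                  | Some p => if isSome (t p) && (p \notin stuck Wb d t)
                              then t p else None
                  | None => None
                  end].

Definition run {L : Type} {l w : nat} (Wb : {set pos l w})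
  (s : seq dir) (t : {ffun pos l w -> option L}) : {ffun pos l w -> option L} :=
  foldl (step Wb) t s.

Definition wse (d : dir) : bool := if d is North then false else true.

(* Horizontal steps keep every tile in its row, and a tile only interacts
   with the maximal open segment of its row: if [a] of the [D] free cells of
   that segment lie west of the tile, a West step decrements [a], an East
   step increments it up to [D], and [a] determines the column of the tile.
   Hence two horizontal step sequences acting alike on all such counters
   with [D <= w] act alike on every configuration.  Rewriting shows that each
   horizontal sequence is equivalent to alternating blocks whose lengths,
   after the first, strictly decrease; these have length at most [w + w^2].
   A South step either changes nothing and can be dropped, or increases the
   sum of the row indices of the [n] tiles, which stays below [n l].
   Shortening the horizontal stretches between the effective South steps
   gives a sequence of length at most [(w + w^2 + 1) n l <= 3 n l w^2]. *)

From mathcomp Require Import all_boot zify.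
Set Implicit Arguments. Unset Strict Implicit. Unset Printing Implicit Defensive.

Definition horiz (d : dir) : bool :=
  match d with West | East => true | _ => false end.

Lemma oppK d : opp (opp d) = d.
Proof. by case: d. Qed.

Lemma horiz_opp d : horiz (opp d) = horiz d.
Proof. by case: d. Qed.

Lemma horiz_same_or_opp x d : horiz x -> horiz d -> d = x \/ d = opp x.
Proof. by case: x; case: d; auto. Qed.

(* The number of free cells west of a tile after the horizontal steps [u],
   when [a] of the [D] free cells of its row segment lie west of it.  Every
   non-West step counts as East. *)
Definition counter (D : nat) (u : seq dir) (a : nat) : nat :=
  foldl (fun a d => if d is West then a.-1 else minn a.+1 D) a u.

Definition hequiv (w : nat) (u v : seq dir) :=
  forall D a, D <= w -> a <= D -> counter D u a = counter D v a.

Section Counter.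
Variable w : nat.

Lemma counter_cat D u v a : counter D (u ++ v) a = counter D v (counter D u a).
Proof. by rewrite /counter foldl_cat. Qed.

Lemma counter_nseq_West D k a : counter D (nseq k West) a = a - k.
Proof. by elim: k a => [|k IH] a /=; [lia | rewrite IH; lia]. Qed.

Lemma counter_nseq_East D k a : a <= D -> counter D (nseq k East) a = minn (a + k) D.
Proof. by elim: k a => [|k IH] a h /=; [lia | rewrite IH; lia]. Qed.

Lemma hequiv_refl u : hequiv w u u.
Proof. by []. Qed.

Lemma hequiv_sym u v : hequiv w u v -> hequiv w v u.
Proof. by move=> h D a hD ha; rewrite h. Qed.

Lemma hequiv_trans u v x : hequiv w u v -> hequiv w v x -> hequiv w u x.
Proof. by move=> h1 h2 D a hD ha; rewrite h1 // h2. Qed.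

Lemma hequiv_cons d u v : hequiv w u v -> hequiv w (d :: u) (d :: v).
Proof. by move=> h D a hD ha /=; apply: h => //; case: d => /=; lia. Qed.

Lemma hequiv_catr u v s : hequiv w u v -> hequiv w (u ++ s) (v ++ s).
Proof. by move=> h D a hD ha; rewrite !counter_cat h. Qed.

Lemma hequiv_nseqS x : horiz x -> hequiv w (nseq w.+1 x) (nseq w x).
Proof.
case: x => //= _ D a hD ha.
  by rewrite (@counter_nseq_East D w.+1 a) // counter_nseq_East //; lia.
by rewrite (@counter_nseq_West D w.+1 a) counter_nseq_West; lia.
Qed.

(* The [b2 >= b1] final steps reach the wall whether or not the first step
   was taken, so it can be traded for one of the [x] steps. *)
Lemma hequiv_bounce x b1 b2 : horiz x -> 0 < b1 <= b2 ->
  hequiv w (opp x :: nseq b1 x ++ nseq b2 (opp x)) (nseq b1.-1 x ++ nseq b2 (opp x)).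
Proof.
case: x => //= _ hb D a hD ha.
  change (counter D (nseq b1 East ++ nseq b2 West) a.-1 =
          counter D (nseq b1.-1 East ++ nseq b2 West) a).
  by rewrite !counter_cat !counter_nseq_West !counter_nseq_East //; lia.
change (counter D (nseq b1 West ++ nseq b2 East) (minn a.+1 D) =
        counter D (nseq b1.-1 West ++ nseq b2 East) a).
by rewrite !counter_cat !counter_nseq_West !counter_nseq_East //; lia.
Qed.

Fixpoint alternate (x : dir) (bs : seq nat) : seq dir :=
  if bs is b :: bs' then nseq b x ++ alternate (opp x) bs' else [::].

Fixpoint desc (m : nat) (bs : seq nat) : bool :=
  if bs is b :: bs' then (0 < b <= m) && desc b.-1 bs' else true.

Definition normal (bs : seq nat) : bool :=
  if bs is b :: bs' then (0 < b <= w) && desc w bs' else true.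

Lemma desc_le m m' bs : m <= m' -> desc m bs -> desc m' bs.
Proof. by case: bs => //= b bs h /andP[/andP[h1 h2] ->]; rewrite h1 /=; lia. Qed.

Lemma desc_sumn m bs : desc m bs -> sumn bs <= m * m.
Proof.
elim: bs m => [|b bs IH] m //= /andP[/andP[h1 h2] /IH h3].
have : b.-1 * b.-1 <= m.-1 * m.-1 by apply: leq_mul; lia.
nia.
Qed.

Lemma size_alternate x bs : size (alternate x bs) = sumn bs.
Proof. by elim: bs x => //= b bs IH x; rewrite size_cat size_nseq IH. Qed.

Lemma all_horiz_alternate x bs : horiz x -> all horiz (alternate x bs).
Proof.
elim: bs x => //= b bs IH x hx.
by rewrite all_cat IH ?horiz_opp // andbT all_nseq hx orbT.
Qed.

Lemma normal_size bs : normal bs -> sumn bs <= w + w * w.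
Proof. by case: bs => //= b bs /andP[hb /desc_sumn]; lia. Qed.

Lemma normal_cons_same x b bs : horiz x -> 0 < b <= w ->
  hequiv w (x :: alternate x (b :: bs)) (alternate x (minn b.+1 w :: bs)).
Proof.
move=> hx hb; have [lt_bw | le_wb] := ltnP b w.
  by rewrite (minn_idPl lt_bw).
have -> : b = w by lia.
have -> : minn w.+1 w = w by lia.
rewrite /= -cat_cons.
by apply: hequiv_catr; apply: hequiv_nseqS.
Qed.

Lemma normal_cons_opp x bs : horiz x -> normal bs -> bs != [::] ->
  exists x' bs', [/\ horiz x', normal bs' &
    hequiv w (opp x :: alternate x bs) (alternate x' bs')].
Proof.
move=> hx; case: bs => [|b [|b2 bs]] //= /andP[hb hbs] _.
  exists (opp x), [:: 1; b]; split; rewrite ?horiz_opp //=.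
    by rewrite hb; lia.
  by rewrite /= oppK cats0; apply: hequiv_refl.
move: hbs => /= /andP[hb2 hbs]; have [lt_b2b | le_bb2] := ltnP b2 b.
  exists (opp x), [:: 1, b, b2 & bs]; split; rewrite ?horiz_opp //=.
    by rewrite hb hbs /= andbT; lia.
  by rewrite /= !oppK; apply: hequiv_refl.
have bounce := hequiv_catr (alternate x bs) (@hequiv_bounce x b b2 hx ltac:(lia)).
rewrite cat_cons -!catA in bounce.
case: b hb le_bb2 bounce => [|[|b]] hb // _ bounce.
  exists (opp x), (b2 :: bs); split; rewrite ?horiz_opp //=.
    by rewrite hb2 (desc_le _ hbs) //; lia.
  by move: bounce; rewrite /= !oppK.
exists x, [:: b.+1, b2 & bs]; split => //=.
  by rewrite hb2 hbs /= andbT; lia.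
by move: bounce; rewrite /= !oppK.
Qed.

Lemma normal_cons x d bs : 0 < w -> horiz x -> horiz d -> normal bs ->
  exists x' bs', [/\ horiz x', normal bs' &
    hequiv w (d :: alternate x bs) (alternate x' bs')].
Proof.
move=> w_gt0 hx hd; case: bs => [|b bs] nbs.
  by exists d, [:: 1]; split => //=; rewrite w_gt0.
have [-> | ->] := horiz_same_or_opp hx hd; last exact: normal_cons_opp.
move: nbs => /= /andP[hb hbs]; exists x, (minn b.+1 w :: bs); split => //.
  by rewrite /= hbs andbT; lia.
exact: normal_cons_same.
Qed.

Lemma hequiv_normal u : 0 < w -> all horiz u ->
  exists x bs, [/\ horiz x, normal bs & hequiv w u (alternate x bs)].
Proof.
move=> w_gt0; elim: u => [|d u IH] /=; first by exists West, [::].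
case/andP=> hd /IH[x [bs [hx nbs e]]].
have [x' [bs' [hx' nbs' e']]] := normal_cons w_gt0 hx hd nbs.
by exists x', bs'; split => //; apply: hequiv_trans (hequiv_cons d e) e'.
Qed.

Lemma hequiv_short u : all horiz u ->
  exists v, [/\ all horiz v, size v <= w + w * w & hequiv w u v].
Proof.
move=> hu; have [w0 | w_gt0] := posnP w.
  exists [::]; split => // D a hD ha; rewrite w0 in hD.
  have -> : D = 0 by lia.
  have -> : a = 0 by lia.
  by elim: u {hu} => //= -[].
have [x [bs [hx nbs e]]] := hequiv_normal w_gt0 hu.
exists (alternate x bs); split => //; first exact: all_horiz_alternate.
by rewrite size_alternate normal_size.
Qed.

End Counter.

Section Board.
Variables (L : Type) (l w : nat) (Wb : {set pos l w}).
Notation P := (pos l w).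
Notation cfg := {ffun P -> option L}.

Lemma pos_ext (p q : P) : (p.1 : nat) = q.1 -> (p.2 : nat) = q.2 -> p = q.
Proof. by case: p q => [a b] [c d] /= /val_inj -> /val_inj ->. Qed.

Definition adjacent (d : dir) (p q : P) : Prop :=
  match d with
  | North => (q.2 : nat) = p.2 /\ (q.1 : nat).+1 = p.1
  | South => (q.2 : nat) = p.2 /\ (p.1 : nat).+1 = q.1
  | East => (q.1 : nat) = p.1 /\ (p.2 : nat).+1 = q.2
  | West => (q.1 : nat) = p.1 /\ (q.2 : nat).+1 = p.2
  end.

Lemma shift_adjacent d (p q : P) : shift d p = Some q <-> adjacent d p q.
Proof.
case: p q => r c [r' c']; have := ltn_ord r'; have := ltn_ord c'.
case: d => /= hc' hr';
  [case: (nat_of_ord r) => [|k]; first by split => // -[]; lia | |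
  | case: (nat_of_ord c) => [|k]; first by split => // -[]; lia].
all: case: insubP => [u hk hu | /negP hk] /=; split => //.
all: try by case=> <- <-; rewrite hu.
all: try by case=> e1 e2; congr (Some (_, _)); apply: val_inj => /=; rewrite ?hu; lia.
all: by case=> _ e; case: hk; lia.
Qed.

Lemma shift_opp d (p q : P) : shift d p = Some q -> shift (opp d) q = Some p.
Proof. by rewrite !shift_adjacent; case: d => /= [[]|[]|[]|[]]. Qed.

Section Step.
Variables (d : dir) (t : cfg).

Lemma stuck_stepS : {homo stuck_step Wb d t : X Y / X \subset Y}.
Proof.
move=> X Y sXY; apply/subsetP => p; rewrite !inE => /andP[-> /=].
by case: shift => // q /orP[-> // | /(subsetP sXY) ->]; rewrite orbT.
Qed.

Lemma stuckE p : (p \in stuck Wb d t) = isSome (t p) &&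
  match shift d p with None => true | Some q => (q \in Wb) || (q \in stuck Wb d t) end.
Proof.
have fix_stuck : stuck_step Wb d t (stuck Wb d t) = stuck Wb d t := fixsetK stuck_stepS.
by rewrite -{1}fix_stuck inE.
Qed.

Lemma stuck_min X : stuck_step Wb d t X \subset X -> stuck Wb d t \subset X.
Proof.
move=> h; rewrite /stuck; elim: #|_| => [|n IH] /=; first exact: sub0set.
by apply: subset_trans h; apply: stuck_stepS.
Qed.

(* Where the tile at [p] is after the step (meaningful for occupied [p]). *)
Definition dest (p : P) := if p \in stuck Wb d t then p else odflt p (shift d p).

Lemma dest_stuck (p : P) : p \in stuck Wb d t -> dest p = p.
Proof. by rewrite /dest => ->. Qed.

Lemma dest_moving (p : P) : isSome (t p) -> p \notin stuck Wb d t ->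
  [/\ shift d p = Some (dest p), dest p \notin Wb & dest p \notin stuck Wb d t].
Proof.
move=> hp hs; move: (hs); rewrite stuckE hp /= /dest (negbTE hs).
by case: shift => // q; rewrite negb_or => /andP[].
Qed.

Lemma step_dest (p : P) : isSome (t p) -> step Wb t d (dest p) = t p.
Proof.
move=> hp; rewrite /step ffunE.
have [hs | hs] := boolP (p \in stuck Wb d t); first by rewrite dest_stuck // hs.
have [sh _ hs'] := dest_moving hp hs.
by rewrite (negbTE hs') (shift_opp sh) hp hs.
Qed.

Lemma step_occupied (q : P) : isSome (step Wb t d q) -> exists2 p, isSome (t p) & q = dest p.
Proof.
rewrite /step ffunE; have [hs | hs] := boolP (q \in stuck Wb d t).
  by move=> h; exists q => //; rewrite dest_stuck.
case E: shift => [p|] //.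
case: (boolP (isSome (t p) && (p \notin stuck Wb d t))) => // /andP[hp hps] _.
exists p => //; rewrite /dest (negbTE hps).
by move/shift_opp: E; rewrite oppK => ->.
Qed.

Lemma dest_inj : {in [pred p | isSome (t p)] &, injective dest}.
Proof.
move=> p1 p2; rewrite !inE => h1 h2.
have [s1 | s1] := boolP (p1 \in stuck Wb d t);
have [s2 | s2] := boolP (p2 \in stuck Wb d t).
- by rewrite !dest_stuck.
- by have [_ _ +] := dest_moving h2 s2; rewrite (dest_stuck s1) => /[swap] <-; rewrite s1.
- by have [_ _ +] := dest_moving h1 s1; rewrite (dest_stuck s2) => /[swap] ->; rewrite s2.
- have [e1 _ _] := dest_moving h1 s1; have [e2 _ _] := dest_moving h2 s2.
  by move=> e; have := shift_opp e1; rewrite e (shift_opp e2) => -[].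
Qed.

Lemma occupied_step : occupied (step Wb t d) = dest @: occupied t.
Proof.
apply/setP => q; rewrite inE; apply/idP/imsetP.
  by case/step_occupied => p hp ->; exists p; rewrite ?inE.
by case=> p; rewrite inE => hp ->; rewrite step_dest.
Qed.

Lemma ntiles_step : ntiles (step Wb t d) = ntiles t.
Proof.
by rewrite /ntiles occupied_step card_in_imset // => p1 p2; rewrite !inE; apply: dest_inj.
Qed.

Lemma step_id : (forall p, isSome (t p) -> p \in stuck Wb d t) -> step Wb t d = t.
Proof.
move=> h; apply/ffunP => q; case E: (t q) => [x|].
  by rewrite -{1}(dest_stuck (h q _)) ?E // step_dest E.
case E2: (step Wb t d q) => [y|] //.
have [p hp eq] := step_occupied (q := q) ltac:(by rewrite E2).
by move: (hp); rewrite -(dest_stuck (h _ hp)) -eq E.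
Qed.

Lemma card_occupied_step (A : P -> {set P}) (p : P) :
  (forall q, isSome (t q) -> (dest q \in A (dest p)) = (q \in A p)) ->
  #|A (dest p) :&: occupied (step Wb t d)| = #|A p :&: occupied t|.
Proof.
move=> hA; have -> : A (dest p) :&: occupied (step Wb t d) = dest @: (A p :&: occupied t).
  apply/setP => z; rewrite inE occupied_step; apply/andP/imsetP.
    case=> hz /imsetP[q hq ez]; exists q => //.
    by rewrite inE hq andbT -hA -?ez //; move: hq; rewrite inE.
  case=> q /setIP[hq hq'] ->; split; last by apply/imsetP; exists q.
  by rewrite hA //; move: hq'; rewrite inE.
by rewrite card_in_imset // => p1 p2; rewrite !inE => /andP[_ h1] /andP[_ h2]; apply: dest_inj.
Qed.

Hypothesis tv : valid Wb t.

Lemma occupied_open (p : P) : isSome (t p) -> p \notin Wb.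
Proof. by move=> hp; apply/negP => /tv; case: (t p) hp. Qed.

Lemma dest_open (p : P) : isSome (t p) -> dest p \notin Wb.
Proof.
move=> hp; have [hs | hs] := boolP (p \in stuck Wb d t).
  by rewrite dest_stuck // occupied_open.
by have [] := dest_moving hp hs.
Qed.

Lemma step_valid : valid Wb (step Wb t d).
Proof.
move=> q hq; case E: (step Wb t d q) => [x|] //.
have [p hp eq] := step_occupied (q := q) ltac:(by rewrite E).
by move: (dest_open hp); rewrite -eq hq.
Qed.
End Step.

(* Moving in a horizontal direction [d] decreases the column's [key d] by one. *)
Definition key (d : dir) (c : nat) := if d is East then w.-1 - c else c.

Lemma key_lt d (c : 'I_w) : key d c < w.
Proof. by have := ltn_ord c; case: d => /=; lia. Qed.

Lemma key_inj d (c1 c2 : 'I_w) : key d c1 = key d c2 -> c1 = c2.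
Proof. by move=> h; apply: val_inj; move: h (ltn_ord c1) (ltn_ord c2); case: d => /=; lia. Qed.

Lemma key_opp d (c : 'I_w) : horiz d -> key (opp d) c = w.-1 - key d c.
Proof. by have := ltn_ord c; case: d => //= *; lia. Qed.

Lemma key_surj d k : k < w -> exists c : 'I_w, key d c = k.
Proof.
move=> hk; have hk' : key d k < w by case: d => /=; lia.
by exists (Ordinal hk') => /=; case: d {hk'} => /=; lia.
Qed.

Lemma adjacent_key d (p q : P) : horiz d ->
  adjacent d p q <-> q.1 = p.1 /\ key d q.2 + 1 = key d p.2.
Proof.
have := ltn_ord p.2; have := ltn_ord q.2.
case: d => //= h1 h2 _; split => -[e1 e2]; split;
  try (by rewrite e1); try (by apply: val_inj; exact: e1); lia.
Qed.

Definition corridor d (p : P) : {set P} :=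
  [set q : P | [&& q.1 == p.1, key d q.2 < key d p.2 &
    [forall j : 'I_w, (key d q.2 <= key d j <= key d p.2) ==> ((p.1, j) \notin Wb)]]].

Lemma corridorP d (p q : P) : reflect
  [/\ q.1 = p.1, key d q.2 < key d p.2 &
      forall j : 'I_w, key d q.2 <= key d j <= key d p.2 -> (p.1, j) \notin Wb]
  (q \in corridor d p).
Proof.
rewrite inE; apply: (iffP and3P) => -[/eqP e1 e2 h]; split => //.
  by move=> j; apply/implyP; move/forallP: h.
by apply/forallP => j; apply/implyP; apply: h.
Qed.

Lemma corridor_opp d (p q : P) : horiz d -> (q \in corridor (opp d) p) = (p \in corridor d q).
Proof.
move=> hd; have lp := key_lt d p.2; have lq := key_lt d q.2.
apply/corridorP/corridorP => -[e1 e2 h]; rewrite !key_opp // in e2 *; split => //;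
  try lia; move=> j; rewrite ?key_opp // => hj; rewrite e1; apply: h;
  rewrite ?key_opp //; have := key_lt d j; lia.
Qed.

Lemma corridor_trans d (p q : P) : q \in corridor d p -> corridor d q \subset corridor d p.
Proof.
case/corridorP=> e1 e2 h; apply/subsetP => x /corridorP[f1 f2 g].
apply/corridorP; split; [by rewrite f1 | lia |].
move=> j hj; have [hj2 | hj2] := leqP (key d j) (key d q.2); last by apply: h; lia.
by rewrite -e1; apply: g; lia.
Qed.

Lemma corridor_adjacent d (x y : P) : y.1 = x.1 -> key d y.2 + 1 = key d x.2 ->
  x \notin Wb -> y \notin Wb -> corridor d x = y |: corridor d y.
Proof.
move=> ey ek hx hy; apply/setP => z; rewrite in_setU1; apply/idP/idP.
  case/corridorP=> e1 e2 hc.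
  case: (ltngtP (key d (z : P).2) (key d y.2)) => hk; [| lia |]; last first.
    by rewrite (pos_ext (p := z) (q := y)) ?eqxx ?e1 ?ey ?(key_inj hk).
  apply/orP; right; apply/corridorP; split; [by rewrite e1 ey | lia |].
  by move=> j hj; rewrite ey; apply: hc; lia.
have at_x (j : 'I_w) : key d j = key d x.2 -> (x.1, j) \notin Wb.
  by move=> /key_inj ->; rewrite -surjective_pairing.
case/orP => [/eqP -> | /corridorP[e1 e2 hc]].
  apply/corridorP; split => // [|j hj]; first lia.
  have [hk | hk | /key_inj ->] := ltngtP (key d j) (key d y.2); first lia.
    by apply: at_x; lia.
  by rewrite -ey -surjective_pairing.
apply/corridorP; split; [by rewrite e1 ey | lia |].
move=> j hj; have [hk | hk] := leqP (key d j) (key d y.2).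
  by rewrite -ey; apply: hc; lia.
by apply: at_x; lia.
Qed.

Lemma card_corridor_adjacent d (x y : P) : y.1 = x.1 -> key d y.2 + 1 = key d x.2 ->
  x \notin Wb -> y \notin Wb -> #|corridor d x| = #|corridor d y| + 1.
Proof.
move=> ey ek hx hy; rewrite (corridor_adjacent ey ek hx hy) cardsU1 addnC.
suff -> : y \notin corridor d y by [].
by apply/negP => /corridorP[_]; rewrite ltnn.
Qed.

Lemma card_corridors d (p : P) : horiz d -> #|corridor d p| + #|corridor (opp d) p| <= w.
Proof.
move=> hd.
have disj : [disjoint corridor d p & corridor (opp d) p].
  apply/pred0P => q /=; rewrite corridor_opp //.
  by apply/negP => /andP[/corridorP[_ h1 _] /corridorP[_ h2 _]]; lia.
have sub : corridor d p :|: corridor (opp d) p \subset pair p.1 @: [set: 'I_w].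
  apply/subsetP => q /setUP[] /corridorP[e1 _ _];
  by apply/imsetP; exists q.2; rewrite ?inE // -e1 -surjective_pairing.
rewrite -cardsUI (disjoint_setI0 disj) cards0 addn0.
apply: leq_trans (subset_leq_card sub) _.
by rewrite (leq_trans (leq_imset_card _ _)) // cardsT card_ord.
Qed.

Definition free d (t : cfg) (p : P) := #|corridor d p :\: occupied t|.

Lemma free_West_East (t : cfg) (p : P) : free West t p + free East t p <= w.
Proof.
have := card_corridors p (d := West) erefl; rewrite /free /=.
have := subset_leq_card (subsetDl (corridor West p) (occupied t)).
have := subset_leq_card (subsetDl (corridor East p) (occupied t)).
set a := #|corridor East p|; set b := #|corridor West p|.
set a' := #|corridor East p :\: _|; set b' := #|corridor West p :\: _|; lia.
Qed.

Section Horizontal.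
Variables (d : dir) (t : cfg).
Hypotheses (hd : horiz d) (tv : valid Wb t).

Lemma shift_key (p q : P) : shift d p = Some q -> q.1 = p.1 /\ key d q.2 + 1 = key d p.2.
Proof. by move/shift_adjacent/adjacent_key; apply. Qed.

Lemma key_shift (p q : P) : q.1 = p.1 -> key d q.2 + 1 = key d p.2 -> shift d p = Some q.
Proof. by move=> e1 e2; apply/shift_adjacent/adjacent_key. Qed.

Lemma shift_None_key (p : P) : shift d p = None -> key d p.2 = 0.
Proof.
move=> E; case: (posnP (key d p.2)) => // hk.
have [c hc] := key_surj d (k := (key d p.2).-1) ltac:(have := key_lt d p.2; lia).
have : shift d p = Some (p.1, c) by apply: key_shift => //=; lia.
by rewrite E.
Qed.

Lemma stuck_corridor_full (p : P) : p \in stuck Wb d t -> corridor d p \subset occupied t.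
Proof.
pose X := [set x | isSome (t x) && (corridor d x \subset occupied t)].
suff /subsetP/(_ p) : stuck Wb d t \subset X by move=> h /h; rewrite inE => /andP[].
apply: stuck_min; apply/subsetP => x; rewrite !inE => /andP[hx hsh]; rewrite hx /=.
apply/subsetP => y /corridorP[e1 e2 hc]; rewrite inE.
case E: (shift d x) hsh => [q|] hsh; last by move: e2; rewrite (shift_None_key E).
have [f1 f2] := shift_key E.
case/orP: hsh => [qW | ].
  by move: (hc q.2 ltac:(lia)); rewrite -f1 -surjective_pairing qW.
rewrite inE => /andP[hq /subsetP hsub].
have [hlt | hge] := ltnP (key d (y : P).2) (key d q.2).
  suff /hsub : y \in corridor d q by rewrite inE.
  apply/corridorP; split; [by rewrite f1 | by [] |].
  by move=> j hj; rewrite f1; apply: hc; lia.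
suff -> : y = q by [].
by apply: pos_ext; [rewrite e1 f1 | congr nat_of_ord; apply: (@key_inj d); lia].
Qed.

Lemma corridor_full_stuck (p : P) : isSome (t p) -> corridor d p \subset occupied t ->
  p \in stuck Wb d t.
Proof.
have [n] := ubnP (key d p.2); elim: n p => // n IH x hn hx hsx.
rewrite stuckE hx /=; case E: (shift d x) => [q|] //.
have [f1 f2] := shift_key E; case: (boolP (q \in Wb)) => //= qW.
have hqc : q \in corridor d x.
  apply/corridorP; split => //; first lia.
  move=> j hj; have [hj2 | hj2] := ltnP (key d j) (key d x.2).
    have -> : j = q.2 by apply: (@key_inj d); lia.
    by rewrite -f1 -surjective_pairing.
  have -> : j = x.2 by apply: (@key_inj d); lia.
  by rewrite -surjective_pairing (occupied_open tv).
have hq : isSome (t q) by have := subsetP hsx q hqc; rewrite inE.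
apply: IH => //; last exact: subset_trans (corridor_trans hqc) hsx.
by move: hn; rewrite -f2 addn1.
Qed.

Lemma stuck_corridor (p : P) : isSome (t p) ->
  (p \in stuck Wb d t) = (corridor d p \subset occupied t).
Proof.
by move=> hp; apply/idP/idP; [apply: stuck_corridor_full | apply: corridor_full_stuck].
Qed.

Lemma stuck_free (p : P) : isSome (t p) -> (p \in stuck Wb d t) = (free d t p == 0).
Proof. by move=> hp; rewrite stuck_corridor // /free cards_eq0 setD_eq0. Qed.

Lemma dest_key (p : P) : isSome (t p) ->
  (dest d t p).1 = p.1 /\ key d (dest d t p).2 + (p \notin stuck Wb d t) = key d p.2.
Proof.
move=> hp; have [hs | hs] := boolP (p \in stuck Wb d t); first by rewrite dest_stuck // addn0.
by have [/shift_key[-> <-] _ _] := dest_moving hp hs.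
Qed.

Lemma dest_corridor_inv (p q : P) : isSome (t p) -> isSome (t q) ->
  dest d t q \in corridor d (dest d t p) -> q \in corridor d p.
Proof.
move=> hp hq /corridorP[f1 f2 g].
have [r1 k1] := dest_key hp; have [r2 k2] := dest_key hq.
have e1 : q.1 = p.1 by rewrite -r1 -r2.
have hlt : key d q.2 < key d p.2.
  rewrite ltn_neqAle; apply/andP; split; last by lia.
  apply/negP => /eqP /key_inj e2.
  by move: f2; rewrite (pos_ext (p := q) (q := p)) ?e1 ?e2 // ltnn.
apply/corridorP; split => // j hj.
have [hj2 | hj2] := leqP (key d j) (key d (dest d t p).2).
  by rewrite -r1; apply: g; lia.
have -> : j = p.2 by apply: (@key_inj d); lia.
by rewrite -surjective_pairing (occupied_open tv).
Qed.

Lemma dest_corridor_mono (p q : P) : isSome (t p) -> isSome (t q) ->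
  q \in corridor d p -> dest d t q \in corridor d (dest d t p).
Proof.
move=> hp hq hqp; have [e1 e2 hc] := corridorP _ _ _ hqp.
have [sp | sp] := boolP (p \in stuck Wb d t).
  have sq : q \in stuck Wb d t.
    rewrite stuck_corridor //.
    exact: subset_trans (corridor_trans hqp) (stuck_corridor_full sp).
  by rewrite !dest_stuck.
have [r1 k1] := dest_key hp; have [r2 k2] := dest_key hq.
have sq_far : q \in stuck Wb d t -> key d q.2 + 1 < key d p.2.
  move=> sq; rewrite ltn_neqAle; apply/andP; split; last by lia.
  apply/negP => /eqP /(key_shift e1) E.
  by move: sp; rewrite stuckE hp E sq orbT.
apply/corridorP; split; first by rewrite r1 r2.
  by case: (boolP (q \in stuck Wb d t)) sq_far k2; lia.
move=> j hj; rewrite r1; have [hj2 | hj2] := leqP (key d q.2) (key d j).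
  by apply: hc; lia.
have [sq | sq] := boolP (q \in stuck Wb d t); first by move: hj; rewrite dest_stuck //; lia.
have -> : j = (dest d t q).2 by apply: (@key_inj d); lia.
by rewrite -e1 -r2 -surjective_pairing (dest_open _ tv).
Qed.

Lemma dest_corridor (p q : P) : isSome (t p) -> isSome (t q) ->
  (dest d t q \in corridor d (dest d t p)) = (q \in corridor d p).
Proof.
by move=> hp hq; apply/idP/idP; [apply: dest_corridor_inv | apply: dest_corridor_mono].
Qed.

Lemma free_step (p : P) : isSome (t p) ->
  free d (step Wb t d) (dest d t p) = free d t p - (p \notin stuck Wb d t).
Proof.
move=> hp; rewrite /free !cardsD card_occupied_step //; last first.
  by move=> q hq; apply: dest_corridor.
have [hs | hs] := boolP (p \in stuck Wb d t); first by rewrite dest_stuck // subn0.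
have [/shift_key[r k] hW _] := dest_moving hp hs.
rewrite (card_corridor_adjacent r k (occupied_open tv hp) hW).
move: (hs); rewrite stuck_free // /free cardsD.
have := subset_leq_card (subsetIl (corridor d p) (occupied t)); lia.
Qed.

Lemma free_step_opp (p : P) : isSome (t p) ->
  free (opp d) (step Wb t d) (dest d t p) = free (opp d) t p + (p \notin stuck Wb d t).
Proof.
move=> hp; rewrite /free !cardsD card_occupied_step //; last first.
  by move=> q hq; rewrite !corridor_opp //; apply: dest_corridor.
have [hs | hs] := boolP (p \in stuck Wb d t); first by rewrite dest_stuck // addn0.
have [/shift_key[r k] hW _] := dest_moving hp hs.
have k' : key (opp d) p.2 + 1 = key (opp d) (dest d t p).2.
  by rewrite !key_opp //; have := key_lt d p.2; lia.
rewrite (card_corridor_adjacent (esym r) k' hW (occupied_open tv hp)).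
have := subset_leq_card (subsetIl (corridor (opp d) p) (occupied t)); lia.
Qed.
End Horizontal.

Lemma free_step_horiz d (t : cfg) (p : P) : horiz d -> valid Wb t -> isSome (t p) ->
  let p' := dest d t p in let t' := step Wb t d in
  let D := free West t p + free East t p in
  [/\ free West t' p' = counter D [:: d] (free West t p),
      free West t' p' + free East t' p' = D,
      p'.1 = p.1 &
      (p'.2 : nat) + free West t p = p.2 + free West t' p'].
Proof.
move=> hd tv hp /=; have [r k] := dest_key hd hp.
have fd := free_step hd tv hp; have fo := free_step_opp hd tv hp.
rewrite (stuck_free hd tv hp) in k fd fo.
have := ltn_ord p.2; have := ltn_ord (dest d t p).2.
by case: d hd r k fd fo => //= _; case: eqP => /= h0 r k -> -> *; split => //; lia.
Qed.

Fixpoint track (u : seq dir) (t : cfg) (p : P) : P :=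
  if u is d :: u' then track u' (step Wb t d) (dest d t p) else p.

Lemma run_valid u (t : cfg) : valid Wb t -> valid Wb (run Wb u t).
Proof. by elim: u t => //= d u IH t tv; apply/IH/step_valid. Qed.

Lemma run_track u (t : cfg) (p : P) : valid Wb t -> isSome (t p) ->
  run Wb u t (track u t p) = t p.
Proof.
elim: u t p => //= d u IH t p tv hp.
by rewrite IH ?step_dest //; apply: step_valid.
Qed.

Lemma run_occupied u (t : cfg) (q : P) : valid Wb t -> isSome (run Wb u t q) ->
  exists2 p, isSome (t p) & q = track u t p.
Proof.
elim: u t q => [|d u IH] t q tv /=; first by exists q.
move=> /(IH _ _ (step_valid d tv))[p1 /step_occupied[p hp ->] ->].
by exists p.
Qed.

Lemma track_free u (t : cfg) (p : P) : all horiz u -> valid Wb t -> isSome (t p) ->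
  let p' := track u t p in let t' := run Wb u t in
  let D := free West t p + free East t p in
  [/\ free West t' p' = counter D u (free West t p),
      free West t' p' + free East t' p' = D,
      p'.1 = p.1 &
      (p'.2 : nat) + free West t p = p.2 + free West t' p'].
Proof.
elim: u t p => [|d u IH] t p /=; first by move=> *; split => //; lia.
case/andP=> hd hu tv hp.
have [e1 e2 e3 e4] := free_step_horiz hd tv hp.
have hp' : isSome (step Wb t d (dest d t p)) by rewrite step_dest.
have [f1 f2 f3 f4] := IH _ _ hu (step_valid d tv) hp'.
split; [by rewrite f1 e2 e1 | by rewrite f2 e2 | by rewrite f3 e3 |].
move: e4 f4 e2; set a := free West _ (dest d t p); set b := free East _ (dest d t p); lia.
Qed.

Lemma track_hequiv u v (t : cfg) (p : P) : all horiz u -> all horiz v -> hequiv w u v ->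
  valid Wb t -> isSome (t p) -> track u t p = track v t p.
Proof.
move=> hu hv he tv hp.
have [a1 _ a3 a4] := track_free hu tv hp; have [b1 _ b3 b4] := track_free hv tv hp.
have ha := he _ (free West t p) (free_West_East t p) (leq_addr _ _).
apply: pos_ext; first by rewrite a3 b3.
by move: a4 b4; rewrite a1 b1 ha; lia.
Qed.

Lemma run_hequiv_occupied u v (t : cfg) (q : P) : all horiz u -> all horiz v ->
  hequiv w u v -> valid Wb t -> isSome (run Wb u t q) -> run Wb v t q = run Wb u t q.
Proof.
move=> hu hv he tv /(run_occupied tv)[p hp ->].
by rewrite {1}(track_hequiv hu hv he tv hp) !run_track.
Qed.

Lemma run_hequiv u v (t : cfg) : all horiz u -> all horiz v -> hequiv w u v ->
  valid Wb t -> run Wb u t = run Wb v t.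
Proof.
move=> hu hv he tv; apply/ffunP => q.
case E: (run Wb u t q) => [x|]; first by rewrite (run_hequiv_occupied hu hv he tv) ?E.
case E': (run Wb v t q) => [y|] //.
by rewrite -E (run_hequiv_occupied hv hu (hequiv_sym he) tv) ?E'.
Qed.

Lemma horiz_run_short h (t : cfg) : all horiz h -> valid Wb t ->
  exists v, [/\ all horiz v, size v <= w + w * w & run Wb v t = run Wb h t].
Proof.
move=> hh tv; have [v [hv sv ev]] := hequiv_short w hh.
by exists v; split => //; apply: run_hequiv => //; apply: hequiv_sym.
Qed.

Definition row_sum (t : cfg) := \sum_(p in occupied t) (p.1 : nat).

Lemma row_sum_step d (t : cfg) :
  row_sum (step Wb t d) = \sum_(p in occupied t) ((dest d t p).1 : nat).
Proof.
rewrite /row_sum occupied_step big_imset // => p1 p2.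
by rewrite !inE; apply: dest_inj.
Qed.

Lemma row_sum_step_horiz d (t : cfg) : horiz d -> row_sum (step Wb t d) = row_sum t.
Proof.
move=> hd; rewrite row_sum_step; apply: eq_bigr => p; rewrite inE => hp.
by case: (dest_key hd hp) => ->.
Qed.

Lemma dest_South_row (t : cfg) (p : P) : isSome (t p) ->
  ((dest South t p).1 : nat) = p.1 + (p \notin stuck Wb South t).
Proof.
move=> hp; have [hs | hs] := boolP (p \in stuck Wb South t).
  by rewrite dest_stuck // addn0.
by have [/shift_adjacent [_ <-] _ _] := dest_moving hp hs; rewrite addn1.
Qed.

Lemma step_South_progress (t : cfg) :
  step Wb t South = t \/ row_sum t < row_sum (step Wb t South).
Proof.
case: (pickP [pred p | isSome (t p) && (p \notin stuck Wb South t)]) => [p | still].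
  case/andP=> hp hs.
  right; rewrite row_sum_step /row_sum (bigD1 p) ?inE //= [X in _ < X](bigD1 p) ?inE //=.
  rewrite dest_South_row // hs addn1 addSn ltnS leq_add2l; apply: leq_sum => q /andP[hq _].
  by rewrite inE in hq; rewrite dest_South_row //; apply: leq_addr.
left; apply: step_id => p hp.
by move: (still p) => /= /negbT; rewrite hp negbK.
Qed.

Lemma ntiles_eq0 (t : cfg) (q : P) : ntiles t = 0 -> t q = None.
Proof.
move/eqP; rewrite cards_eq0 => /eqP t0.
have : q \notin occupied t by rewrite t0 in_set0.
by rewrite inE; case: (t q).
Qed.

Lemma run_cat a b (t : cfg) : run Wb (a ++ b) t = run Wb b (run Wb a t).
Proof. by rewrite /run foldl_cat. Qed.

Lemma ntiles_run s (t : cfg) : ntiles (run Wb s t) = ntiles t.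
Proof. by elim: s t => //= d s IH t; rewrite IH ntiles_step. Qed.

Lemma row_sum_run_horiz s (t : cfg) : all horiz s -> row_sum (run Wb s t) = row_sum t.
Proof. by elim: s t => //= d s IH t /andP[hd hs]; rewrite IH // row_sum_step_horiz. Qed.

Lemma row_sum_lt (t : cfg) : 0 < ntiles t -> row_sum t < ntiles t * l.
Proof.
case/card_gt0P => p0 p0t; rewrite /row_sum /ntiles -sum_nat_const (bigD1 p0) //=.
rewrite [X in _ < X](bigD1 p0) //= -addSn leq_add ?ltn_ord //.
by apply: leq_sum => p _; rewrite ltnW.
Qed.

Lemma all_horiz_wse s : all horiz s -> all wse s.
Proof. by apply: sub_all; case. Qed.

Lemma wse_cases s : all wse s -> all horiz s \/
  exists h s', [/\ s = h ++ South :: s', all horiz h & all wse s'].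
Proof.
elim: s => [|d s IH] /=; first by left.
case/andP => hd hs; case: d hd => // _.
2: by right; exists [::], s.
all: have [hh | [h [s' [-> hh hs']]]] := IH hs; first by left; rewrite /= hh.
all: by right; eexists (_ :: h), s'.
Qed.

Lemma budget_step B n a b x y : x < B -> a < b < n -> y <= B * (n - b) ->
  x + y.+1 <= B * (n - a).
Proof.
move=> hx /andP[hab hbn] hy.
have : B * (n - b) + B <= B * (n - a) by rewrite addnC -mulnS leq_mul //; lia.
lia.
Qed.

Lemma wse_run_short s (t : cfg) : all wse s -> valid Wb t -> 0 < ntiles t ->
  exists s', [/\ all wse s', size s' <= (w + w * w).+1 * (ntiles t * l - row_sum t)
               & run Wb s' t = run Wb s t].
Proof.
have [k] := ubnP (size s); elim: k s t => // k IH s t hk hs tv hn.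
have hlt := row_sum_lt hn.
case: (wse_cases hs) => [hh | [h [s2 [es hh hs2]]]].
  have [v [hv sv ev]] := horiz_run_short hh tv.
  exists v; split => //; first exact: all_horiz_wse hv.
  by apply: (leq_trans sv); rewrite -[X in X <= _]muln1 leq_mul // subn_gt0.
have [v [hv sv ev]] := horiz_run_short hh tv.
set t1 := run Wb h t; have tv1 : valid Wb t1 := run_valid h tv.
have run_s : run Wb s t = run Wb s2 (step Wb t1 South) by rewrite es run_cat.
have [e | grow] := step_South_progress t1.
  have hk' : size (h ++ s2) < k by move: hk; rewrite es !size_cat /=; lia.
  have hs' : all wse (h ++ s2) by rewrite all_cat hs2 (all_horiz_wse hh).
  have [s' [hs'' ss' es']] := IH _ _ hk' hs' tv hn.
  by exists s'; rewrite es' run_s e run_cat.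
have nt2 : ntiles (step Wb t1 South) = ntiles t by rewrite ntiles_step ntiles_run.
have hk2 : size s2 < k by move: hk; rewrite es size_cat /=; lia.
have [s' [hs' ss' es']] := IH _ _ hk2 hs2 (step_valid South tv1) (ltac:(by rewrite nt2)).
exists (v ++ South :: s'); split.
- by rewrite all_cat /= hs' (all_horiz_wse hv).
- have lt2 := row_sum_lt (ltac:(by rewrite nt2) : 0 < ntiles (step Wb t1 South)).
  have r1 : row_sum t1 = row_sum t by rewrite row_sum_run_horiz.
  rewrite nt2 in ss' lt2; rewrite r1 in grow.
  by rewrite size_cat; apply: budget_step ss'; rewrite ?ltnS ?grow.
- by rewrite run_cat /= ev -/t1 es'.
Qed.
End Board.

Theorem lemma2 :
  exists c : nat,
  forall (L : Type) (l w : nat) (Wb : {set pos l w})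
         (t t' : {ffun pos l w -> option L}),
    valid Wb t -> valid Wb t' ->
    (exists s : seq dir, all wse s /\ run Wb s t = t') ->
    exists s : seq dir,
      [/\ all wse s, size s <= c * (ntiles t * l * w ^ 2) & run Wb s t = t'].
Proof.
exists 3 => L l w Wb t _ tv _ [s [hs <-]].
have [n0 | n_gt0] := posnP (ntiles t).
  exists [::]; split => //; apply/ffunP => q.
  by rewrite /= !ntiles_eq0 ?ntiles_run.
have [s' [hs' ss' <-]] := wse_run_short hs tv n_gt0.
exists s'; split => //; apply: (leq_trans ss').
have w_gt0 : 0 < w by case/card_gt0P: n_gt0 => p _; apply: leq_ltn_trans (ltn_ord p.2).
have : (w + w * w).+1 <= 3 * w ^ 2 by nia.
move/(leq_mul (leq_subr (row_sum t) (ntiles t * l))); nia.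
Qed.
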